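(* Let $\phi$ be the standard Gaussian density, $h$ a probability density on $\mathbb R$ that is symmetric, positive and decreasing on $[0,\infty)$, $m\ge0$ and $c_0>0$. There exists $c>0$ depending only on $h,m,c_0$ such that for all $n\ge1$, $\sigma>0$ and real numbers $X$, $x\ge0$ with $|X|\le x$ and $\sigma\le c_0x$, $$\int_{\mathbb R}|\theta|^m\,\phi(\sqrt n(X-\theta))\,h(\theta/\sigma)\,d\theta\ \ge\ c\,\sigma^{m+1}\phi(\sqrt n\,x).$$ *)

From HB Require Import structures.
From mathcomp Require Import all_boot all_order all_algebra.
From mathcomp Require Import all_classical all_reals all_analysis.
Set Implicit Arguments. Unset Strict Implicit. Unset Printing Implicit Defensive.
Import Order.TTheory GRing.Theory Num.Theory.
Local Open Scope ring_scope.

Definition gauss_density {R : realType} (t : R) : R :=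
  expR (- (t ^+ 2) / 2) / Num.sqrt (2 * pi).

Definition sym_pos_decr_density {R : realType} (h : R -> R) : Prop :=
  [/\ measurable_fun [set: R] h,
      (\int[@lebesgue_measure R]_(x in [set: R]) (h x)%:E = 1)%E,
      (forall x, h (- x) = h x),
      (forall x, 0 < h x) &
      (forall s t, 0 <= s -> s <= t -> h t <= h s)].

From HB Require Import structures.
From mathcomp Require Import all_boot all_order all_algebra.
From mathcomp Require Import all_classical all_reals all_analysis.
From mathcomp Require Import ring lra.
From mathcomp Require Import measurable_realfun.
Import Order.TTheory GRing.Theory Num.Theory.
Local Open Scope ring_scope.

(* Take d = k sigma with k = min(1, 1/c0), so that d <= sigma and d <= x.
   The integrand is bounded below on an interval of length d/2 lying in
   d/2 <= |theta| <= d on the same side of 0 as X: there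
   |theta|^m >= (d/2)^m, h(theta/sigma) >= h 1 since |theta/sigma| <= 1, and
   phi(sqrt n (X - theta)) >= phi(sqrt n x) because X and theta have the same
   sign and modulus at most x.  Integrating this constant over the interval
   gives (d/2)^(m+1) h(1) phi(sqrt n x), a constant times
   sigma^(m+1) phi(sqrt n x). *)

Section weighted_gauss_integral.
Context {R : realType}.

Lemma gauss_density_ge0 (t : R) : 0 <= gauss_density t.
Proof. by rewrite divr_ge0 // ltW // expR_gt0. Qed.

Lemma le_gauss_density (u v : R) :
  `|u| <= `|v| -> gauss_density v <= gauss_density u.
Proof.
move=> uv; rewrite /gauss_density ler_wpM2r // ?invr_ge0 // ler_expR.
have : u ^+ 2 <= v ^+ 2.
  by rewrite -(real_normK (num_real u)) -(real_normK (num_real v)) ler_sqr.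
lra.
Qed.

Lemma measurable_gauss_density : measurable_fun [set: R] gauss_density.
Proof.
apply: measurable_funM => //.
apply: measurableT_comp; first exact: measurable_expR.
by apply: measurable_funM => //; apply/measurable_funN/measurable_funX.
Qed.

Lemma even_nonincreasing_le_norm (h : R -> R) :
  (forall x, h (- x) = h x) ->
  (forall s t, 0 <= s -> s <= t -> h t <= h s) ->
  forall s t, `|s| <= `|t| -> h t <= h s.
Proof.
move=> h_even h_decr s t st.
have h_norm u : h u = h `|u|.
  by case: (leP 0 u) => u0; rewrite ?(ger0_norm u0) ?(ltr0_norm u0) ?h_even.
by rewrite (h_norm s) (h_norm t); exact: h_decr.
Qed.

Lemma integral_ge_cst_itv (f : R -> R) (a b C : R) :
  measurable_fun [set: R] f -> (forall t, 0 <= f t) -> 0 <= C -> a <= b ->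
  (forall t, a <= t <= b -> C <= f t) ->
  ((C * (b - a))%:E <= \int[@lebesgue_measure R]_(t in [set: R]) (f t)%:E)%E.
Proof.
move=> mf f0 C0 ab fC.
have mab : measurable (`[a, b]%classic : set R) by exact: measurable_itv.
have lab : @lebesgue_measure R (`[a, b]%classic : set R) = (b - a)%:E.
  rewrite lebesgue_measure_itv /= lte_fin.
  case: ltP => [_|ba]; first by rewrite -EFinD.
  by rewrite [b](@le_anti _ _ b a) ?ab ?ba // subrr.
apply: (@le_trans _ _ (\int[@lebesgue_measure R]_(t in `[a, b]) (cst C%:E) t)%E).
  by rewrite integral_cst // EFinM -lab.
apply: (@le_trans _ _ (\int[@lebesgue_measure R]_(t in `[a, b]) (f t)%:E)%E).
  apply: ge0_le_integral => //.
  by apply/measurable_EFinP; exact: measurable_funS _ _ mf.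
apply: ge0_subset_integral => //; first exact/measurable_EFinP.
by move=> t _; rewrite lee_fin.
Qed.

Lemma exists_itv_in_annulus_ball (X x d : R) :
  `|X| <= x -> 0 < d -> d <= x ->
  exists a, forall t, a <= t <= a + d / 2 -> d / 2 <= `|t| <= d /\ `|X - t| <= x.
Proof.
move=> Xx d0 dx; rewrite ler_norml in Xx; case/andP: Xx => xX Xx.
have [X0|X0] := leP 0 X; [exists (d / 2) | exists (- d)] => t /andP[t1 t2].
- rewrite ger0_norm; last lra.
  by split; [apply/andP; split|rewrite ler_norml; apply/andP; split]; lra.
- rewrite ler0_norm; last lra.
  by split; [apply/andP; split|rewrite ler_norml; apply/andP; split]; lra.
Qed.

Section integral_lower_bound.
Variable h : R -> R.
Hypotheses (mh : measurable_fun [set: R] h) (h_ge0 : forall x, 0 <= h x)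
  (h_even : forall x, h (- x) = h x)
  (h_decr : forall s t, 0 <= s -> s <= t -> h t <= h s).

Lemma measurable_weighted_gauss (m a X s : R) :
  measurable_fun [set: R]
    (fun t => `|t| `^ m * gauss_density (a * (X - t)) * h (t / s)).
Proof.
apply: measurable_funM; last exact: measurableT_comp mh (measurable_funM _ _).
apply: measurable_funM; first exact: measurableT_comp (measurable_powR m) _.
apply: measurableT_comp measurable_gauss_density _.
by apply: measurable_funM => //; exact: measurable_funB.
Qed.

Lemma weighted_gauss_integral_ge (m a X x s d : R) :
  0 <= m -> 0 < d -> d <= s -> d <= x -> `|X| <= x ->
  (((d / 2) `^ m * gauss_density (a * x) * h 1 * (d / 2))%:E <=
   \int[@lebesgue_measure R]_(t in [set: R])
     (`|t| `^ m * gauss_density (a * (X - t)) * h (t / s))%:E)%E.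
Proof.
move=> m0 d0 ds dx Xx; have s0 : 0 < s by exact: lt_le_trans ds.
have [u itv_u] := exists_itv_in_annulus_ball _ _ _ Xx d0 dx.
rewrite [X in (_ * X)%:E](_ : d / 2 = u + d / 2 - u); last by ring.
apply: integral_ge_cst_itv.
- exact: measurable_weighted_gauss.
- by move=> t; rewrite !mulr_ge0 ?powR_ge0 ?gauss_density_ge0.
- by rewrite !mulr_ge0 ?powR_ge0 ?gauss_density_ge0.
- by rewrite lerDl divr_ge0 ?ltW.
move=> t /itv_u [/andP[dt td] Xt].
rewrite ler_pM ?mulr_ge0 ?powR_ge0 ?gauss_density_ge0 //.
- rewrite ler_pM ?powR_ge0 ?gauss_density_ge0 //.
    by apply: ge0_ler_powR; rewrite // nnegrE divr_ge0 // ltW.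
  apply: le_gauss_density.
  by rewrite !normrM (ger0_norm (le_trans (ltW d0) dx)) ler_wpM2l.
- apply: even_nonincreasing_le_norm => //.
  rewrite normr1 normrM normfV (gtr0_norm s0) ler_pdivrMr // mul1r.
  exact: le_trans td ds.
Qed.

End integral_lower_bound.

End weighted_gauss_integral.

Theorem mainTheorem6 (R : realType) (h : R -> R) (m c0 : R) :
  sym_pos_decr_density h -> 0 <= m -> 0 < c0 ->
  exists c : R, 0 < c /\
    forall (n : nat) (sigma X x : R),
      (1 <= n)%N -> 0 < sigma -> 0 <= x -> `|X| <= x -> sigma <= c0 * x ->
      ((c * sigma `^ (m + 1) * gauss_density (Num.sqrt (n%:R) * x))%:E <=
       \int[@lebesgue_measure R]_(theta in [set: R])
          (`|theta| `^ m * gauss_density (Num.sqrt (n%:R) * (X - theta))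
             * h (theta / sigma))%:E)%E.
Proof.
move=> [mh _ h_even h_gt0 h_decr] m0 c0_gt0.
pose k := Num.min 1 c0^-1.
have k_gt0 : 0 < k by rewrite lt_min ltr01 invr_gt0.
have k_le1 : k <= 1 by rewrite ge_min lexx.
have k_le_inv : k <= c0^-1 by rewrite ge_min lexx orbT.
exists ((k / 2) `^ (m + 1) * h 1).
split; first by rewrite mulr_gt0 ?h_gt0 ?powR_gt0 ?divr_gt0.
move=> n s X x _ s0 _ Xx sx; pose d := k * s.
have d_gt0 : 0 < d by rewrite mulr_gt0.
have d_le_s : d <= s by rewrite ler_piMl // ltW.
have d_le_x : d <= x.
  by rewrite (le_trans (ler_wpM2r (ltW s0) k_le_inv)) // ler_pdivrMl.
have pow_ks : (k / 2) `^ (m + 1) * s `^ (m + 1) = (d / 2) `^ m * (d / 2).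
  rewrite -powRM ?divr_ge0 ?ltW // mulrAC powRD ?powRr1 ?divr_ge0 ?ltW //.
  by apply/implyP => _; rewrite gt_eqF // divr_gt0.
set G := gauss_density _.
have -> : (k / 2) `^ (m + 1) * h 1 * s `^ (m + 1) * G
          = (d / 2) `^ m * G * h 1 * (d / 2).
  transitivity ((k / 2) `^ (m + 1) * s `^ (m + 1) * G * h 1); first by ring.
  by rewrite pow_ks; ring.
by apply: weighted_gauss_integral_ge => // t; exact: ltW.
Qed.
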